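(* Consider a common-value auction for a single item among several ''slow'' bidders and one ''fast'' bidder, all risk neutral. The value of the item evolves as $v_t = e^{m_t} v_0$ for $t \ge 0$, where $v_0>0$ and $m_t \sim N(-\tfrac{\sigma^2}{2} t, \sigma^2 t)$ (a geometric Brownian motion with $\sigma>0$, so $\mathbb{E}[v_{t+\delta}\mid v_t] = v_t$ for all $t,\delta\ge 0$). The slow bidders submit sealed bids at time $0$. The fast bidder observes the slow bidders' bids and the value process, and submits its bid at time $\Delta>0$. The highest bidder wins, pays its own bid, and receives the realized value $v_\Delta$. Then in equilibrium the slow bidders bid $0$ and the fast bidder wins the item with probability $1$; indeed, any bid $b>0$ by a slow bidder yields strictly negative expected payoff.
   Context: A bidder's payoff is $v_\Delta$ minus its bid if it wins, and $0$ otherwise. *)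

From HB Require Import structures.
From mathcomp Require Import all_boot all_order all_algebra.
From mathcomp Require Import all_classical all_reals all_analysis.
Set Implicit Arguments. Unset Strict Implicit. Unset Printing Implicit Defensive.
Import Order.TTheory GRing.Theory Num.Theory.
Local Open Scope ring_scope.

Section Auction.
Context {R : realType} {n : nat}.

Definition slow_profile := 'I_n -> R.

(* Highest slow bid (bids are nonnegative, so 0 is a neutral start). *)
Definition max_slow (b : slow_profile) : R := \big[Num.max/0]_(i < n) b i.

(* A strategy of the fast bidder: its bid at time Delta as a function of the
   observed slow bids and of the realized value v_Delta. *)
Definition fast_strategy := slow_profile -> R -> R.

(* Highest bid wins; a tie between the fast bidder and the highest slow bid
   is resolved in favour of the fast bidder. *)
Definition fast_wins (b : slow_profile) (x : R) : bool := max_slow b <= x.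

(* Slow bidder i wins iff the fast bidder loses and i is the highest slow
   bidder (ties among slow bidders broken in favour of the lowest index). *)
Definition slow_wins (b : slow_profile) (x : R) (i : 'I_n) : bool :=
  [&& x < max_slow b, b i == max_slow b &
      [forall j : 'I_n, (j < i)%N ==> (b j < b i)]].

Definition fast_payoff (b : slow_profile) (x v : R) : R :=
  if fast_wins b x then v - x else 0.

Definition slow_payoff (b : slow_profile) (x v : R) (i : 'I_n) : R :=
  if slow_wins b x i then v - b i else 0.

(* The fast bidder best-responds (ex post, after observing everything). *)
Definition fast_best_response (F : fast_strategy) : Prop :=
  forall b : slow_profile, (forall i, 0 <= b i) -> forall v : R, 0 < v ->
    0 <= F b v /\ forall x : R, 0 <= x -> fast_payoff b x v <= fast_payoff b (F b v) v.

(* v_Delta = v0 * exp(m) with m ~ N(-sigma^2 Delta / 2, sigma^2 Delta). *)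
Definition m_mean (sigma Delta : R) : R := - (sigma ^+ 2 * Delta) / 2.
Definition m_sd (sigma Delta : R) : R := sigma * Num.sqrt Delta.
Definition v_Delta (v0 m : R) : R := v0 * expR m.

Definition exp_slow_payoff (v0 sigma Delta : R) (F : fast_strategy)
    (b : slow_profile) (i : 'I_n) : \bar R :=
  (\int[normal_prob (m_mean sigma Delta) (m_sd sigma Delta)]_m
     (slow_payoff b (F b (v_Delta v0 m)) (v_Delta v0 m) i)%:E)%E.

Definition prob_fast_wins (v0 sigma Delta : R) (F : fast_strategy)
    (b : slow_profile) : \bar R :=
  normal_prob (m_mean sigma Delta) (m_sd sigma Delta)
    [set m | fast_wins b (F b (v_Delta v0 m))].

Definition deviate (i : 'I_n) (c : R) : slow_profile :=
  fun j => if j == i then c else 0.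

End Auction.

From HB Require Import structures.
From mathcomp Require Import all_boot all_order all_algebra.
From mathcomp Require Import all_classical all_reals all_analysis.
From mathcomp Require Import ring lra measurable_realfun.

(* Against a best-responding fast bidder, a slow bidder who alone bids c wins
   only when the fast bidder declines to match, which it does only if
   v_Delta <= c; otherwise matching is profitable.  So its ex-post payoff is
   min (v_Delta - c) 0 = - (c - v_Delta)^+, and when all slow bids are 0 the
   fast bidder wins for free.  For c > 0 the expectation -E[(c - v_Delta)^+]
   is negative because the log-normal v_Delta lies below c / 2 with positive
   probability: the normal density is bounded below on compact intervals. *)

Set Implicit Arguments.
Unset Strict Implicit.
Unset Printing Implicit Defensive.
Import Order.TTheory GRing.Theory Num.Theory.
Local Open Scope ring_scope.
Local Open Scope classical_set_scope.

Section Payoffs.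
Context {R : realType} {n : nat}.
Implicit Types (b : @slow_profile R n) (i : 'I_n) (c v x : R).

Lemma max_slow_ge0 b : 0 <= max_slow b.
Proof. exact: bigmax_ge_id. Qed.

Lemma max_slow0 : max_slow (fun _ : 'I_n => 0 : R) = 0.
Proof. exact: bigmax_eq_id. Qed.

Lemma max_slow_deviate i c : 0 <= c -> max_slow (deviate i c) = c.
Proof.
move=> c_ge0; rewrite /max_slow (bigmaxD1 i) // bigmax_eq_id => [|j /negPf ji].
  by rewrite /deviate eqxx max_l.
by rewrite /deviate ji.
Qed.

Lemma deviate0 i : deviate i 0 = fun _ => 0 :> R.
Proof. by apply/funext => j; rewrite /deviate; case: ifP. Qed.

Lemma slow_wins_deviate i c x : 0 <= x -> 0 <= c ->
  slow_wins (deviate i c) x i = (x < c).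
Proof.
move=> x_ge0 c_ge0; rewrite /slow_wins max_slow_deviate // /deviate eqxx eqxx /=.
case: ltP => //= xc; apply/forallP => j; apply/implyP => ji.
by rewrite ifF ?(le_lt_trans x_ge0) //; apply/negbTE; rewrite neq_ltn ji.
Qed.

Section BestResponse.
Variable F : @fast_strategy R n.
Hypothesis F_best : fast_best_response F.
Variables (b : @slow_profile R n) (v : R).
Hypotheses (b_ge0 : forall i, 0 <= b i) (v_gt0 : 0 < v).

Lemma fast_bid_ge0 : 0 <= F b v.
Proof. by have [] := F_best b_ge0 v_gt0. Qed.

Lemma fast_loses_unprofitable : F b v < max_slow b -> v <= max_slow b.
Proof.
move=> lost; have [_ /(_ _ (max_slow_ge0 b))] := F_best b_ge0 v_gt0.
by rewrite /fast_payoff /fast_wins lexx (lt_geF lost); lra.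
Qed.

Lemma fast_wins_profitable :
  0 < max_slow b -> max_slow b <= F b v -> max_slow b <= v.
Proof.
move=> max_gt0 won; have [_ /(_ _ (lexx 0))] := F_best b_ge0 v_gt0.
by rewrite /fast_payoff /fast_wins won (lt_geF max_gt0); lra.
Qed.

End BestResponse.

Lemma slow_payoff_deviate (F : @fast_strategy R n) i c v :
  fast_best_response F -> 0 <= c -> 0 < v ->
  slow_payoff (deviate i c) (F (deviate i c) v) v i = Num.min (v - c) 0.
Proof.
move=> F_best c_ge0 v_gt0.
have dev_ge0 j : 0 <= deviate i c j by rewrite /deviate; case: ifP.
have max_dev := max_slow_deviate i c_ge0.
have F_ge0 := fast_bid_ge0 F_best dev_ge0 v_gt0.
rewrite /slow_payoff slow_wins_deviate //; case: ltP => [lost|won].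
  have := fast_loses_unprofitable F_best dev_ge0 v_gt0.
  rewrite max_dev => /(_ lost) vc.
  by rewrite min_l /deviate ?eqxx //; lra.
have cv : c <= v.
  have [->|c_neq0] := eqVneq c 0; first exact: ltW.
  rewrite -{1}max_dev (fast_wins_profitable F_best dev_ge0 v_gt0) // max_dev //.
  by rewrite lt_def c_neq0.
by rewrite min_r //; lra.
Qed.

End Payoffs.

Section PositiveIntegrals.
Context {R : realType}.

Lemma integral_gt0_lbound d (T : measurableType d)
    (mu : {measure set T -> \bar R}) (D A : set T) (f : T -> R) (e : R) :
  measurable D -> measurable A -> A `<=` D -> measurable_fun D f ->
  (forall x, D x -> 0 <= f x) -> 0 < e -> (forall x, A x -> e <= f x) ->
  (0 < mu A)%E -> (0 < \int[mu]_(x in D) (f x)%:E)%E.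
Proof.
move=> mD mA AD mf f_ge0 e_gt0 e_le_f muA_gt0.
apply: (@lt_le_trans _ _ (\int[mu]_(x in A) (f x)%:E)%E).
  apply: (@lt_le_trans _ _ (\int[mu]_(x in A) (cst e%:E) x)%E).
    by rewrite integral_cst // mule_gt0 // lte_fin.
  apply: ge0_le_integral => //.
  - by move=> x _; rewrite lee_fin ltW.
  - by apply/measurable_EFinP; exact: measurable_funS mf.
apply: ge0_subset_integral => //; exact/measurable_EFinP.
Qed.

Lemma normal_prob_itv_gt0 (m s a b : R) : s != 0 -> a < b ->
  (0 < normal_prob m s `[a, b])%E.
Proof.
move=> s_neq0 ab.
set K := (`|a - m| + `|b - m|) ^+ 2.
rewrite /normal_prob.
apply: (integral_gt0_lbound (mu := lebesgue_measure) (A := `[a, b])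
  (e := normal_peak s * expR (- K / (s ^+ 2 *+ 2)))) => //.
- by apply: measurable_funTS; exact: measurable_normal_pdf.
- by move=> x _; exact: normal_pdf_ge0.
- by rewrite mulr_gt0 ?expR_gt0 ?normal_peak_gt0.
- move=> x; rewrite /= in_itv /= => /andP[ax xb].
  rewrite normal_pdfE // ler_pM2l ?normal_peak_gt0 // /normal_fun ler_expR.
  rewrite !mulNr lerN2 ler_pM2r ?invr_gt0 ?pmulrn_lgt0 ?exprn_even_gt0 //.
  have := ler_norm (a - m); have := ler_norm (b - m).
  have := ler_norm (m - a); have := ler_norm (m - b).
  rewrite /K (distrC m a) (distrC m b); nra.
- change (0 < lebesgue_measure (`[a, b] : set R))%E.
  by rewrite lebesgue_measure_itv /= lte_fin ab -EFinD lte_fin subr_gt0.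
Qed.

End PositiveIntegrals.

Section ExpectedPayoff.
Context {R : realType} {n : nat}.
Implicit Types (c : R) (i : 'I_n).

Lemma v_Delta_gt0 (v0 m : R) : 0 < v0 -> 0 < v_Delta v0 m.
Proof. by move=> v0_gt0; rewrite mulr_gt0 ?expR_gt0. Qed.

Lemma measurable_v_Delta (v0 : R) : measurable_fun [set: R] (v_Delta v0).
Proof. by apply: measurable_funM => //; exact: measurable_expR. Qed.

Lemma expected_shortfall_gt0 (v0 c mu s : R) : 0 < v0 -> 0 < c -> s != 0 ->
  (0 < \int[normal_prob mu s]_m (Num.max (c - v_Delta v0 m) 0)%:E)%E.
Proof.
move=> v0_gt0 c_gt0 s_neq0.
pose a := ln (c / (v0 *+ 2)).
have v0_expR_a : v0 * expR a = c / 2.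
  rewrite /a lnK; last by rewrite posrE divr_gt0 // pmulrn_lgt0.
  by field; rewrite gt_eqF.
apply: (integral_gt0_lbound (mu := normal_prob mu s) (A := `[a - 1, a])
  (e := c / 2)) => //.
- have -> : (fun m => Num.max (c - v_Delta v0 m) 0) =
            (fun m => c - v_Delta v0 m) \max cst 0 by [].
  apply: measurable_maxr => //; apply: measurable_funB => //.
  exact: measurable_v_Delta.
- by move=> m _; rewrite le_max lexx orbT.
- by rewrite divr_gt0.
- move=> m; rewrite /= in_itv /= => /andP[_ ma].
  rewrite le_max; apply/orP; left.
  have : v_Delta v0 m <= c / 2 by rewrite -v0_expR_a ler_pM2l // ler_expR.
  lra.
- by apply: normal_prob_itv_gt0 => //; rewrite gtrBl.
Qed.

Lemma exp_slow_payoff_deviate (v0 sigma Delta : R) (F : @fast_strategy R n) i c :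
  0 < v0 -> fast_best_response F -> 0 <= c ->
  exp_slow_payoff v0 sigma Delta F (deviate i c) i =
  (- \int[normal_prob (m_mean sigma Delta) (m_sd sigma Delta)]_m
       (Num.max (c - v_Delta v0 m) 0)%:E)%E.
Proof.
move=> v0_gt0 F_best c_ge0.
rewrite /exp_slow_payoff -integral_ge0N => [|m _]; last first.
  by rewrite lee_fin le_max lexx orbT.
apply: eq_integral => m _.
by rewrite slow_payoff_deviate ?v_Delta_gt0 // -EFinN oppr_max opprB oppr0.
Qed.

Lemma exp_slow_payoff_zero (v0 sigma Delta : R) (F : @fast_strategy R n) i :
  0 < v0 -> fast_best_response F ->
  exp_slow_payoff v0 sigma Delta F (fun _ => 0) i = 0%E.
Proof.
move=> v0_gt0 F_best; rewrite -(deviate0 i) /exp_slow_payoff.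
rewrite (eq_integral (cst 0%E)) ?integral0 // => m _.
by rewrite slow_payoff_deviate ?v_Delta_gt0 // subr0 min_r // ltW ?v_Delta_gt0.
Qed.

End ExpectedPayoff.

Theorem mainTheorem4 (R : realType) (n : nat) (v0 sigma Delta : R)
  (F : @fast_strategy R n) :
  (0 < n)%N -> 0 < v0 -> 0 < sigma -> 0 < Delta ->
  fast_best_response F ->
  (forall b : slow_profile, measurable_fun [set: R] (F b)) ->
  [/\ prob_fast_wins v0 sigma Delta F (fun _ => 0) = 1%E,
      (forall (i : 'I_n) (c : R), 0 <= c ->
         (exp_slow_payoff v0 sigma Delta F (deviate i c) i
          <= exp_slow_payoff v0 sigma Delta F (fun _ => 0%R) i)%E) &
      (forall (i : 'I_n) (c : R), 0 < c ->
         (exp_slow_payoff v0 sigma Delta F (deviate i c) i < 0)%E)].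
Proof.
move=> _ v0_gt0 sigma_gt0 Delta_gt0 F_best _.
have sd_neq0 : m_sd sigma Delta != 0 by rewrite gt_eqF // mulr_gt0 // sqrtr_gt0.
split.
- rewrite /prob_fast_wins (_ : [set m | _] = setT) ?probability_setT //.
  apply/seteqP; split => // m _.
  by rewrite /= /fast_wins max_slow0 (fast_bid_ge0 F_best) // v_Delta_gt0.
- move=> i c c_ge0.
  rewrite exp_slow_payoff_zero // exp_slow_payoff_deviate // oppe_le0.
  by apply: integral_ge0 => m _; rewrite lee_fin le_max lexx orbT.
- move=> i c c_gt0; rewrite exp_slow_payoff_deviate ?ltW // oppe_lt0.
  exact: expected_shortfall_gt0.
Qed.
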